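(* Let $n$ be even, let $1\le m\le n/2$, and let $F,F'\colon\mathbb F_2^n\to\mathbb F_2^m$ be two $(n,m)$-bent functions. Then $F$ and $F'$ are extended-affine equivalent if and only if their addition designs $\mathbb D(F)$ and $\mathbb D(F')$ are isomorphic.
   Context: An $(n,m)$-function is a map $F\colon\mathbb F_2^n\to\mathbb F_2^m$. For $\mathbf b\in\mathbb F_2^m$ the component function is $F_{\mathbf b}(\mathbf x)=\langle \mathbf b,F(\mathbf x)\rangle_m$ (standard dot product), and the Walsh transform is $W_F(\mathbf a,\mathbf b)=\sum_{\mathbf x\in\mathbb F_2^n}(-1)^{F_{\mathbf b}(\mathbf x)\oplus\langle\mathbf a,\mathbf x\rangle_n}$. $F$ is bent if $W_F(\mathbf a,\mathbf b)=\pm 2^{n/2}$ for all $\mathbf a\in\mathbb F_2^n$ and all $\mathbf b\in\mathbb F_2^m\setminus\{\mathbf 0\}$. Two $(n,m)$-functions $F,F'$ are extended-affine (EA-) equivalent if $F=A_1\circ F'\circ A_2\oplus A_3$ for a linear permutation $A_1$ of $\mathbb F_2^m$, an affine permutation $A_2$ of $\mathbb F_2^n$ and an affine map $A_3\colon\mathbb F_2^n\to\mathbb F_2^m$. For an $(n,m)$-bent $F$, let $\mathcal C(F)\subseteq\mathbb F_2^{2^n}$ be the binary linear code spanned by the rows of the $(n+m+1)\times 2^n$ matrix whose column indexed by $\mathbf x\in\mathbb F_2^n$ is $(1,\mathbf x,F(\mathbf x))^T$ (coordinates indexed by $\mathbb F_2^n$). The addition design $\mathbb D(F)$ is the incidence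 structure with point set $\mathbb F_2^n$ and block set $\{\operatorname{supp}(c): c\in\mathcal C(F),\ \operatorname{wt}(c)=2^{n-1}-2^{n/2-1}\}$. Two incidence structures are isomorphic if there exist permutation matrices $P,Q$ with $M=P M' Q$ for their incidence matrices $M,M'$ (equivalently, a bijection of points inducing a bijection of blocks). *)

From HB Require Import structures.
From mathcomp Require Import all_boot all_order all_algebra all_fingroup.
Set Implicit Arguments. Unset Strict Implicit. Unset Printing Implicit Defensive.
Import GRing.Theory Num.Theory.
Local Open Scope ring_scope.

Notation vec n := 'rV['F_2]_n.

Definition dot (n : nat) (a b : vec n) : 'F_2 := \sum_(i < n) a 0 i * b 0 i.

Definition sgn (e : 'F_2) : int := if e == 0 then 1 else -1.

Definition walsh (n m : nat) (F : vec n -> vec m) (a : vec n) (b : vec m) : int :=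
  \sum_(x : vec n) sgn (dot b (F x) + dot a x).

Definition is_bent (n m : nat) (F : vec n -> vec m) : Prop :=
  forall (a : vec n) (b : vec m), b != 0 ->
    walsh F a b = (2 ^ n./2)%:Z \/ walsh F a b = - (2 ^ n./2)%:Z.

(* EA-equivalence: F = A1 o F' o A2 + A3 with A1 linear permutation of F_2^m
   (y |-> y *m L, L invertible), A2 affine permutation of F_2^n
   (x |-> x *m M + c, M invertible), A3 affine map F_2^n -> F_2^m
   (x |-> x *m N + d). *)
Definition EA_equiv (n m : nat) (F F' : vec n -> vec m) : Prop :=
  exists (L : 'M['F_2]_m) (M : 'M['F_2]_n) (c : vec n) (N : 'M['F_2]_(n, m)) (d : vec m),
    [/\ L \in unitmx, M \in unitmx &
        forall x : vec n, F x = F' (x *m M + c) *m L + (x *m N + d)].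

(* The code C(F): the row span of the matrix with columns (1, x, F(x))^T,
   i.e. all words x |-> l*1 + <u, x> + <v, F(x)> (coordinates indexed by F_2^n). *)
Definition codeword (n m : nat) (F : vec n -> vec m) (l : 'F_2) (u : vec n) (v : vec m)
  : {ffun vec n -> 'F_2} := [ffun x => l + dot u x + dot v (F x)].

Definition code (n m : nat) (F : vec n -> vec m) : {set {ffun vec n -> 'F_2}} :=
  [set codeword F luv.1.1 luv.1.2 luv.2 | luv : 'F_2 * vec n * vec m].

Definition supp (n : nat) (c : {ffun vec n -> 'F_2}) : {set vec n} := [set x | c x != 0].

Definition wt (n : nat) (c : {ffun vec n -> 'F_2}) : nat := #|supp c|.

Definition add_design (n m : nat) (F : vec n -> vec m) : {set {set vec n}} :=
  [set supp c | c in code F & wt c == (2 ^ n.-1 - 2 ^ (n./2).-1)%N].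

Definition design_iso (n : nat) (D D' : {set {set vec n}}) : Prop :=
  exists s : {perm vec n}, [set [set s x | x in B] | B : {set vec n} in D'] = D.

(* EA-equivalence acts on the code C(F) as an affine permutation of the
   coordinates, hence maps blocks to blocks.  Conversely, a binary word is
   determined by its support, so an isomorphism s of the designs transports
   every block word l + <u,x> + <v,F'(x)> to a codeword of C(F) composed with
   s; bentness guarantees such a block word for every u and every v <> 0, and
   forbids a codeword involving a nonzero component of F from being affine
   after a permutation (its sign sum is +-2^(n/2), never 0 or +-2^n).
   Adding the transported words for (0, v) and (e_i, v) cancels the component
   of F' and leaves x_i, so every coordinate of s^-1 is affine: s^-1 is an
   affine permutation.  Transporting the words of the components of F' then
   writes F' o s^-1 as F times a matrix W plus an affine map, and W is
   invertible because F' is bent. *)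

From HB Require Import structures.
From mathcomp Require Import all_boot all_order all_algebra all_fingroup.
From mathcomp Require Import zify ring.
Set Implicit Arguments. Unset Strict Implicit. Unset Printing Implicit Defensive.
Import GRing.Theory Num.Theory.
Local Open Scope ring_scope.

Lemma F2_cases (a : 'F_2) : a = 0 \/ a = 1.
Proof. by case: a => [[|[|//]]] ?; [left|right]; apply/val_inj. Qed.

Lemma F2_eq_neq0 (a b : 'F_2) : (a != 0) = (b != 0) -> a = b.
Proof. by case: (F2_cases a) => ->; case: (F2_cases b) => ->. Qed.

Lemma addrr_F2 (a : 'F_2) : a + a = 0.
Proof. by case: (F2_cases a) => ->; apply/eqP. Qed.

Lemma sgnD (a b : 'F_2) : sgn (a + b) = sgn a * sgn b.
Proof. by case: (F2_cases a) => ->; case: (F2_cases b) => ->. Qed.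

Lemma sgn1D (a : 'F_2) : sgn (1 + a) = - sgn a.
Proof. by case: (F2_cases a) => ->. Qed.

Lemma sgn_cases (a : 'F_2) : sgn a = 1 \/ sgn a = -1.
Proof. by case: (F2_cases a) => ->; [left|right]. Qed.

Section Dot.
Variable n : nat.
Implicit Types a b c : vec n.

Lemma dotE a b : dot a b = (a *m b^T) 0 0.
Proof. by rewrite /dot !mxE; apply: eq_bigr => i _; rewrite !mxE. Qed.

Lemma dotC a b : dot a b = dot b a.
Proof. by rewrite /dot; apply: eq_bigr => i _; rewrite mulrC. Qed.

Lemma dotDl a b c : dot (a + b) c = dot a c + dot b c.
Proof. by rewrite !dotE mulmxDl mxE. Qed.

Lemma dotDr a b c : dot a (b + c) = dot a b + dot a c.
Proof. by rewrite ![dot a _]dotC dotDl. Qed.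

Lemma dotBr a b c : dot a (b - c) = dot a b - dot a c.
Proof. by rewrite /dot -sumrB; apply: eq_bigr => i _; rewrite !mxE mulrBr. Qed.

Lemma dotNl a c : dot (- a) c = - dot a c.
Proof. by rewrite !dotE mulNmx mxE. Qed.

Lemma dot0l c : dot 0 c = 0.
Proof. by rewrite dotE mul0mx mxE. Qed.

Lemma dot_delta (i : 'I_n) c : dot (delta_mx 0 i) c = c 0 i.
Proof.
rewrite /dot (bigD1 i) //= big1 ?addr0 => [|j ji]; first by rewrite mxE !eqxx mul1r.
by rewrite mxE (negbTE ji) andbF mul0r.
Qed.

End Dot.

Lemma dot_mulmx p q (a : vec p) (b : vec q) (K : 'M_(q, p)) :
  dot a (b *m K) = dot (a *m K^T) b.
Proof. by rewrite !dotE trmx_mul mulmxA. Qed.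

Lemma mulmx_tr_coord p q (w : 'I_p -> vec q) (y : vec q) (j : 'I_p) :
  (y *m (\matrix_i w i)^T) 0 j = dot (w j) y.
Proof. by rewrite dotC /dot mxE; apply: eq_bigr => i _; rewrite !mxE. Qed.

Lemma delta_mx_neq0 n (i : 'I_n) : delta_mx 0 i != 0 :> vec n.
Proof. by apply/eqP => /rowP /(_ i) /eqP; rewrite !mxE !eqxx oner_eq0. Qed.

Lemma affine_inj_unitmx (R : fieldType) n (M : 'M[R]_n) (c : 'rV[R]_n) :
  injective (fun y => y *m M + c) -> M \in unitmx.
Proof.
move=> injA; rewrite unitmxE unitfE; apply/negP => /det0P [z z_neq0 zM0].
by move: z_neq0; rewrite -(injA z 0) /= ?eqxx // zM0 mul0mx.
Qed.

Lemma unitmx_affine_inj (R : comUnitRingType) n (M : 'M[R]_n) (c : 'rV[R]_n) :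
  M \in unitmx -> injective (fun y => y *m M + c).
Proof. by move=> unitM x y /addIr /(can_inj (mulmxK unitM)). Qed.

Lemma card_vec n : #|{: vec n}| = (2 ^ n)%N.
Proof. by rewrite card_mx card_Fp // mul1n. Qed.

Lemma sum_sgn_wt n (c : {ffun vec n -> 'F_2}) :
  \sum_(x : vec n) sgn (c x) = (2 ^ n)%:Z - 2 * (wt c)%:Z.
Proof.
rewrite (bigID (fun x => c x == 0)) /=.
rewrite (eq_bigr (fun _ => 1)); last by move=> x /eqP ->.
rewrite [X in _ + X](eq_bigr (fun _ => -1)); last by move=> x /negbTE; rewrite /sgn => ->.
rewrite !sumr_const -card_vec -(cardC (fun x => c x == 0)) /wt /supp.
have -> : #|[pred x | c x != 0]| = #|[set x | c x != 0]|.
  by apply: eq_card => x; rewrite !inE.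
set w := #|[set x | c x != 0]|; set z := #|(fun x : vec n => c x == 0)|.
rewrite mulNrn PoszD; lia.
Qed.

Lemma sum_sgn_affine n (a : vec n) (b : 'F_2) :
  \sum_(x : vec n) sgn (dot a x + b) = if a == 0 then sgn b * (2 ^ n)%N%:Z else 0.
Proof.
have [->|a_neq0] := eqVneq a 0.
  under eq_bigr do rewrite dot0l add0r.
  by rewrite sumr_const card_vec -mulr_natr natz.
have [i ai] : exists i, a 0 i != 0.
  apply/existsP; apply: contraR a_neq0 => /existsPn a0.
  by apply/eqP/rowP => i; rewrite mxE; apply/eqP/negbNE/a0.
have {}ai : a 0 i = 1 by case: (F2_cases (a 0 i)) ai => ->; rewrite ?eqxx.
set S := \sum_x _.
suff : S = - S by lia.
(* translating by e_i flips every sign *)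
rewrite {1}/S (reindex_inj (addIr (delta_mx 0 i))) /= -sumrN.
apply: eq_bigr => x _; rewrite dotDr (@dotC _ a (delta_mx 0 i)) dot_delta ai -sgn1D.
by congr sgn; ring.
Qed.

Lemma sum_sgn_codeword n m (F : vec n -> vec m) l u v :
  \sum_(x : vec n) sgn (codeword F l u v x) = sgn l * walsh F u v.
Proof.
rewrite /walsh mulr_sumr; apply: eq_bigr => x _.
by rewrite ffunE -addrA (addrC (dot u x)) (sgnD l).
Qed.

Lemma codewordD n m (F : vec n -> vec m) l1 u1 v1 l2 u2 v2 x :
  codeword F l1 u1 v1 x + codeword F l2 u2 v2 x =
  codeword F (l1 + l2) (u1 + u2) (v1 + v2) x.
Proof. by rewrite !ffunE !dotDl; ring. Qed.

Lemma mem_add_design n m (F : vec n -> vec m) B :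
  B \in add_design F <-> exists l u v, B = supp (codeword F l u v) /\
        wt (codeword F l u v) = (2 ^ n.-1 - 2 ^ (n./2).-1)%N.
Proof.
split.
  case/imsetP => c; rewrite inE => /andP[/imsetP[[[l u] v] _ ->] /eqP wt_c] ->.
  by exists l, u, v.
case=> l [u [v [-> wt_c]]]; apply/imsetP; exists (codeword F l u v) => //.
by rewrite inE wt_c eqxx andbT; apply/imsetP; exists (l, u, v).
Qed.

Section Bent.
Variables (n m k : nat) (F : vec n -> vec m).
Hypotheses (n_eq : n = k.*2) (k_gt0 : (0 < k)%N) (bentF : is_bent F).

Lemma bent_walsh u v : v != 0 ->
  walsh F u v = (2 ^ k)%N%:Z \/ walsh F u v = - (2 ^ k)%N%:Z.
Proof. by move=> v_neq0; rewrite -(doubleK k) -n_eq; apply: bentF. Qed.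

Lemma bent_block u v : v != 0 ->
  exists l, supp (codeword F l u v) \in add_design F.
Proof.
move=> v_neq0.
have [l sum_l] : exists l, \sum_(x : vec n) sgn (codeword F l u v x) = (2 ^ k)%N%:Z.
  case: (bent_walsh u v_neq0) => walsh_uv; [exists 0 | exists 1];
  by rewrite sum_sgn_codeword walsh_uv /sgn ?eqxx ?oner_eq0 ?mul1r ?mulN1r ?opprK.
exists l; apply/mem_add_design; exists l, u, v; split => //.
move: sum_l; rewrite sum_sgn_wt; move: (wt _) => w; rewrite n_eq doubleK.
case: k k_gt0 => // k' _.
rewrite doubleS /= !expnS -addnn expnD; set a := (2 ^ k')%N; nia.
Qed.

Lemma bent_codeword_not_affine {l u v} {p : {perm vec n}} {a : vec n} {b} :
  v != 0 -> ~ (forall x, codeword F l u v (p x) = dot a x + b).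
Proof.
move=> v_neq0 cw_affine.
have := sum_sgn_codeword F l u v.
rewrite (reindex_inj (@perm_inj _ p)) /=.
under eq_bigr do rewrite cw_affine.
rewrite sum_sgn_affine.
have -> : (2 ^ n = 2 ^ k * 2 ^ k)%N by rewrite n_eq -addnn expnD.
have k2_gt1 : (1 < 2 ^ k)%N by rewrite -{1}(expn0 2) ltn_exp2l.
case: eqP => _; [case: (sgn_cases b) => -> |]; case: (sgn_cases l) => ->;
  case: (bent_walsh u v_neq0) => ->; nia.
Qed.

End Bent.

Lemma supp_comp_perm n (p : {perm vec n}) (c : {ffun vec n -> 'F_2}) :
  supp [ffun x => c (p x)] = [set (p^-1)%g x | x in supp c].
Proof.
apply/setP => x; rewrite inE ffunE.
by rewrite -{2}(permK p x) mem_imset ?inE //; apply: perm_inj.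
Qed.

Lemma wt_comp_perm n (p : {perm vec n}) (c : {ffun vec n -> 'F_2}) :
  wt [ffun x => c (p x)] = wt c.
Proof. by rewrite /wt supp_comp_perm card_imset //; apply: perm_inj. Qed.

Lemma add_design_comp_perm n m (F F' : vec n -> vec m) (p : {perm vec n}) :
  code F = [set [ffun x => c (p x)] | c : {ffun vec n -> 'F_2} in code F'] ->
  [set [set (p^-1)%g x | x in B] | B : {set vec n} in add_design F'] = add_design F.
Proof.
move=> codeF; apply/setP => B; apply/imsetP/imsetP.
  case=> B0 /imsetP [c]; rewrite inE => /andP [c_code wt_c] -> ->.
  exists [ffun x => c (p x)]; last by rewrite supp_comp_perm.
  by rewrite inE codeF imset_f //= wt_comp_perm.
case=> w; rewrite inE codeF => /andP [/imsetP [c c_code ->] wt_c] ->.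
exists (supp c); last by rewrite supp_comp_perm.
by apply/imsetP; exists c; rewrite // inE c_code -(wt_comp_perm p).
Qed.

Section EA.
Variables (n m : nat) (F F' : vec n -> vec m).
Variables (L : 'M['F_2]_m) (M : 'M['F_2]_n) (c : vec n) (N : 'M['F_2]_(n, m)) (d : vec m).
Hypotheses (unitL : L \in unitmx) (unitM : M \in unitmx).
Hypothesis F_EA : forall x : vec n, F x = F' (x *m M + c) *m L + (x *m N + d).

Lemma codeword_EA l u v : exists l' u' v', forall x,
  codeword F l u v x = codeword F' l' u' v' (x *m M + c).
Proof.
set u' := (u + v *m N^T) *m (invmx M)^T.
exists (l + dot v d - dot u' c), u', (v *m L^T) => x.
have u'M : u' *m M^T = u + v *m N^T.
  by rewrite /u' -mulmxA -trmx_mul mulmxV // trmx1 mulmx1.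
rewrite !ffunE F_EA !dotDr !dot_mulmx u'M dotDl; ring.
Qed.

Lemma codeword_EA_inv l u v : exists l' u' v', forall x,
  codeword F' l u v (x *m M + c) = codeword F l' u' v' x.
Proof.
set v' := v *m (invmx L)^T.
exists (l + dot u c - dot v' d), (u *m M^T - v' *m N^T), v' => x.
have F'_EA : F' (x *m M + c) = (F x - (x *m N + d)) *m invmx L.
  by rewrite F_EA addrK mulmxK.
rewrite !ffunE F'_EA !dotDr !dot_mulmx -/v' dotBr dotDr !dot_mulmx !dotDl dotNl.
ring.
Qed.

Definition EA_perm : {perm vec n} := perm (unitmx_affine_inj (c := c) unitM).

Lemma code_EA : code F = [set [ffun x => w (EA_perm x)] | w : {ffun vec n -> 'F_2} in code F'].
Proof.
apply/setP => w; apply/imsetP/imsetP.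
  case=> [[[l u] v]] _ ->; have [l' [u' [v' cwE]]] := codeword_EA l u v.
  exists (codeword F' l' u' v'); first by apply/imsetP; exists (l', u', v').
  by apply/ffunP => x; rewrite /= cwE [in RHS]ffunE permE.
case=> _ /imsetP [[[l u] v] _ ->] ->.
have [l' [u' [v' cwE]]] := codeword_EA_inv l u v.
exists (l', u', v') => //; apply/ffunP => x.
by rewrite [in LHS]ffunE permE /= cwE.
Qed.

End EA.

Lemma supp_perm_eq n (s : {perm vec n}) (c c' : {ffun vec n -> 'F_2}) :
  [set s x | x in supp c'] = supp c -> forall x, c (s x) = c' x.
Proof.
move=> supp_s x; apply: F2_eq_neq0.
have : (s x \in supp c) = (x \in supp c').
  by rewrite -supp_s mem_imset //; apply: perm_inj.
by rewrite !inE.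
Qed.

Lemma mx_affine_of_coord p q r (G : vec q -> vec p) (H : vec q -> vec r) :
  (forall j : 'I_p, exists a : 'F_2 * vec q * vec r,
     forall y, G y 0 j = a.1.1 + dot a.1.2 y + dot a.2 (H y)) ->
  exists (W : 'M_(r, p)) (U : 'M_(q, p)) (b : vec p),
    forall y, G y = H y *m W + y *m U + b.
Proof.
case/fin_all_exists => a Ga.
exists (\matrix_j (a j).2)^T, (\matrix_j (a j).1.2)^T, (\row_j (a j).1.1) => y.
apply/rowP => j; rewrite Ga 2!mxE !mulmx_tr_coord mxE; ring.
Qed.

Section Transport.
Variables (n m k : nat) (F F' : vec n -> vec m).
Hypotheses (n_eq : n = k.*2) (k_gt0 : (0 < k)%N) (m_gt0 : (0 < m)%N).
Hypotheses (bentF : is_bent F) (bentF' : is_bent F').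
Variable s : {perm vec n}.
Hypothesis s_iso :
  [set [set s x | x in B] | B : {set vec n} in add_design F'] = add_design F.

Lemma transport_codeword u v : v != 0 -> exists l l' u' v',
  forall x, codeword F l' u' v' (s x) = codeword F' l u v x.
Proof.
move=> v_neq0; have [l block] := bent_block n_eq k_gt0 bentF' u v_neq0.
have : [set s x | x in supp (codeword F' l u v)] \in add_design F.
  by rewrite -s_iso imset_f.
case/mem_add_design => l' [u' [v' [supp_s _]]].
by exists l, l', u', v'; apply: supp_perm_eq.
Qed.

Lemma perm_inv_coord_affine (i : 'I_n) : exists (w : vec n) (b : 'F_2),
  forall x : vec n, x 0 i = b + dot w (s x).
Proof.
pose v0 : vec m := delta_mx 0 (Ordinal m_gt0).
have v0_neq0 : v0 != 0 by apply: delta_mx_neq0.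
have [l1 [a1 [u1 [v1 cw1]]]] := transport_codeword 0 v0_neq0.
have [l2 [a2 [u2 [v2 cw2]]]] := transport_codeword (delta_mx 0 i) v0_neq0.
have sum_cw (x : vec n) :
    codeword F (a1 + a2) (u1 + u2) (v1 + v2) (s x) = dot (delta_mx 0 i) x + (l1 + l2).
  rewrite -codewordD cw1 cw2 !ffunE dot0l addr0.
  transitivity (dot (delta_mx 0 i) x + (l1 + l2) + (dot v0 (F' x) + dot v0 (F' x))).
    by ring.
  by rewrite addrr_F2 addr0.
have v12 : v1 + v2 = 0.
  apply/eqP; apply: contraT => v12_neq0.
  by case: (bent_codeword_not_affine n_eq k_gt0 bentF v12_neq0 sum_cw).
exists (u1 + u2), (a1 + a2 - (l1 + l2)) => x.
move: (sum_cw x); rewrite ffunE v12 dot0l addr0 dot_delta => cwE.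
by rewrite addrAC cwE; ring.
Qed.

Lemma perm_inv_affine : exists (M : 'M['F_2]_n) (c : vec n),
  M \in unitmx /\ forall y, (s^-1)%g y = y *m M + c.
Proof.
have [W [U [c sE]]] : exists (W U : 'M_n) (c : vec n),
    forall y, (s^-1)%g y = y *m W + y *m U + c.
  apply: (mx_affine_of_coord (H := id)) => i.
  have [w [b sw]] := perm_inv_coord_affine i.
  by exists (b, 0, w) => y; rewrite /= sw permKV dot0l addr0.
have sE' y : (s^-1)%g y = y *m (W + U) + c by rewrite sE mulmxDr.
exists (W + U), c; split => //.
by apply: (affine_inj_unitmx (c := c)) => x y; rewrite -!sE'; apply: perm_inj.
Qed.

Lemma comp_perm_inv_affine : exists (W : 'M['F_2]_m) (U : 'M_(n, m)) (b : vec m),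
  W \in unitmx /\ forall y, F' ((s^-1)%g y) = F y *m W + y *m U + b.
Proof.
have [W [U [b F'E]]] : exists W U b,
    forall y, F' ((s^-1)%g y) = F y *m W + y *m U + b.
  apply: mx_affine_of_coord => j.
  have ej_neq0 : delta_mx 0 j != 0 :> vec m by apply: delta_mx_neq0.
  have [l [a [u [w cwE]]]] := transport_codeword 0 ej_neq0.
  exists (a - l, u, w) => y; move: (cwE ((s^-1)%g y)).
  rewrite permKV !ffunE dot0l addr0 dot_delta => cwE'.
  by rewrite -(addKr l (F' _ 0 j)) -cwE' /=; ring.
exists W, U, b; split => //.
rewrite unitmxE unitfE -det_tr; apply/negP => /det0P [z z_neq0 zW].
(* a nonzero component z of F' would be affine after s^-1 *)
apply: (bent_codeword_not_affine n_eq k_gt0 bentF' (l := 0) (u := 0)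
          (p := (s^-1)%g) (a := z *m U^T) (b := dot z b) z_neq0) => y.
by rewrite ffunE F'E !dotDr !dot_mulmx zW dot0l add0r dot0l !add0r.
Qed.

Lemma design_iso_EA : EA_equiv F F'.
Proof.
have [M [c [unitM sE]]] := perm_inv_affine.
have [W [U [b [unitW F'E]]]] := comp_perm_inv_affine.
exists (invmx W), M, c, (- (U *m invmx W)), (- (b *m invmx W)).
split; [by rewrite unitmx_inv | exact: unitM | move=> x].
rewrite -sE F'E !mulmxDl mulmxK // -mulmxA !mulmxN.
set p := x *m _; set q := b *m _.
by rewrite -opprD -[F x + p + q]addrA addrK.
Qed.

End Transport.

Lemma EA_design_iso n m (F F' : vec n -> vec m) :
  EA_equiv F F' -> design_iso (add_design F) (add_design F').
Proof.
case=> L [M [c [N [d [unitL unitM F_EA]]]]].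
exists (EA_perm c unitM)^-1%g.
exact: add_design_comp_perm (code_EA unitL unitM F_EA).
Qed.

Theorem theorem1 (n m : nat) (F F' : vec n -> vec m) :
  ~~ odd n -> (1 <= m)%N -> (m <= n./2)%N ->
  is_bent F -> is_bent F' ->
  (EA_equiv F F' <-> design_iso (add_design F) (add_design F')).
Proof.
move=> n_even m_gt0 m_le bentF bentF'.
have n_eq : n = (n./2).*2 by rewrite -[n in LHS]odd_double_half (negbTE n_even).
have k_gt0 : (0 < n./2)%N by apply: leq_trans m_gt0 m_le.
split; first exact: EA_design_iso.
by case=> s s_iso; apply: design_iso_EA n_eq k_gt0 m_gt0 bentF bentF' s s_iso.
Qed.
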